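(* Let $X$ be a nodal toric Fano threefold and $\widetilde{X}\to X$ a small crepant toric resolution. Then there is an exact sequence $$0\longrightarrow\operatorname{Pic}(X)\longrightarrow\operatorname{Pic}(\widetilde{X})\xrightarrow{\ \phi\ }\bigoplus_{ABCD}\mathbb{Z},$$ where the sum runs over all quadrangular faces $\rho_A\rho_B\rho_C\rho_D$ (vertices in cyclic order) of the fan polytope of $X$, $\phi=\oplus_{ABCD}\phi_{ABCD}$, and $\phi_{ABCD}\big(\sum_\rho a_\rho D_\rho\big)=a_{\rho_A}-a_{\rho_B}+a_{\rho_C}-a_{\rho_D}$.
   Context: The fan polytope is the convex hull of the primitive ray generators; quadrangular faces correspond to the nodes of $X$. $D_\rho$ is the torus-invariant prime divisor of the ray $\rho$; since the resolution is small, torus-invariant Weil divisors on $X$ and $\widetilde{X}$ are identified, and $\operatorname{Pic}(X)\to\operatorname{Pic}(\widetilde{X})$ is pullback. *)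

From HB Require Import structures.
From mathcomp Require Import all_boot all_order all_algebra.
Set Implicit Arguments. Unset Strict Implicit. Unset Printing Implicit Defensive.
Import Order.TTheory GRing.Theory Num.Theory.
Local Open Scope ring_scope.

(* Lattice N = Z^3 as row vectors 'rV[int]_3; M = Z^3 dual lattice. *)
Definition dotZ (m x : 'rV[int]_3) : int := \sum_(k < 3) m 0 k * x 0 k.
Definition toQ (x : 'rV[int]_3) : 'rV[rat]_3 := map_mx (fun z : int => z%:~R) x.
Definition dotQ (u : 'rV[rat]_3) (x : 'rV[int]_3) : rat :=
  \sum_(k < 3) u 0 k * (x 0 k)%:~R.

Definition det3 (a b c : 'rV[int]_3) : int :=
  \det (\matrix_(i < 3, k < 3) ([:: a; b; c]`_i) 0 k).

Definition primitive (x : 'rV[int]_3) : Prop :=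
  forall d : int, (forall k : 'I_3, (d %| x ord0 k)%Z) -> `|d| = 1.

Section Fan.
Variables (n : nat) (v : 'I_n -> 'rV[int]_3).

Definition is_vertex (i : 'I_n) : Prop :=
  ~ exists lam : 'I_n -> rat,
      [/\ forall j, 0 <= lam j, lam i = 0, \sum_j lam j = 1
        & \sum_j lam j *: toQ (v j) = toQ (v i)].

Definition zero_interior : Prop :=
  forall u : 'rV[rat]_3, u != 0 -> exists i, 0 < dotQ u (v i).

Definition fano_polytope : Prop :=
  [/\ injective v, forall i, primitive (v i), forall i, is_vertex i
    & zero_interior].

Definition is_facet (F : {set 'I_n}) : Prop :=
  (exists u : 'rV[rat]_3,
      (forall i, dotQ u (v i) <= 1) /\ (forall i, i \in F <-> dotQ u (v i) = 1))
  /\ (exists i j k, [/\ i \in F, j \in F, k \in F & det3 (v i) (v j) (v k) != 0]).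

Definition quad_face (F : {set 'I_n}) : Prop := is_facet F /\ #|F| = 4.

(* (A,B,C,D) lists the vertices of the quadrilateral F in cyclic order:
   AC and BD are the two diagonals (they cross). *)
Definition cyclic_labeling (F : {set 'I_n}) (A B C D : 'I_n) : Prop :=
  F = [set A; B; C; D] /\
  exists s t : rat, [/\ 0 < s < 1, 0 < t < 1 &
     s *: toQ (v A) + (1 - s) *: toQ (v C) = t *: toQ (v B) + (1 - t) *: toQ (v D)].

Definition unimodular (i j k : 'I_n) : Prop := `|det3 (v i) (v j) (v k)| = 1.

(* Nodal: every maximal cone (cone over a facet) is smooth or a node
   (cone over a unit square: A + C = B + D with A,B,C a lattice basis). *)
Definition nodal : Prop :=
  forall F, is_facet F ->
    (exists i j k, F = [set i; j; k] /\ #|F| = 3 /\ unimodular i j k) \/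
    (#|F| = 4 /\ exists A B C D, [/\ cyclic_labeling F A B C D,
         v A + v C = v B + v D & unimodular A B C]).

Definition in_cone (S : {set 'I_n}) (x : 'rV[rat]_3) : Prop :=
  exists lam : 'I_n -> rat, [/\ forall i, 0 <= lam i, forall i, i \notin S -> lam i = 0
                              & x = \sum_i lam i *: toQ (v i)].

(* Sigma' : maximal cones (as sets of ray indices) of a fan with the same
   rays, refining the face fan of P, with the same support, smooth:
   a small (hence crepant) toric resolution of X. *)
Definition small_resolution (Sig' : {set {set 'I_n}}) : Prop :=
  [/\ (forall t, t \in Sig' -> exists i j k, [/\ t = [set i; j; k], #|t| = 3 & unimodular i j k]),
      (forall t, t \in Sig' -> exists F, is_facet F /\ t \subset F),
      (forall F x, is_facet F -> in_cone F x -> exists2 t, t \in Sig' & t \subset F /\ in_cone t x)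
    & (forall t1 t2 x, t1 \in Sig' -> t2 \in Sig' -> in_cone t1 x -> in_cone t2 x ->
          in_cone (t1 :&: t2) x)].

(* Torus-invariant Weil divisors: sum_i a i D_i, a : 'I_n -> int. *)
Definition cartier (cones : {set 'I_n} -> Prop) (a : 'I_n -> int) : Prop :=
  forall s, cones s -> exists m : 'rV[int]_3, forall i, i \in s -> dotZ m (v i) = - a i.

(* principal divisors div(chi^m) = sum_i <m, v_i> D_i *)
Definition principal (a : 'I_n -> int) : Prop :=
  exists m : 'rV[int]_3, forall i, a i = dotZ m (v i).

Definition lin_equiv (a b : 'I_n -> int) : Prop := principal (fun i => a i - b i).

Definition phiABCD (a : 'I_n -> int) (A B C D : 'I_n) : int := a A - a B + a C - a D.

End Fan.

From HB Require Import structures.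
From mathcomp Require Import all_boot all_order all_algebra.
From mathcomp Require Import zify ring lra.
Set Implicit Arguments. Unset Strict Implicit. Unset Printing Implicit Defensive.
Import Order.TTheory GRing.Theory Num.Theory.
Local Open Scope ring_scope.

(* Cartier data on a smooth cone always exist, since its rays form a lattice basis.
   On a node with rays A', B', C', D' the only linear relation among the rays is
   v_A' + v_C' = v_B' + v_D', so a is Cartier there iff a_A' - a_B' + a_C' - a_D' = 0.
   The given cyclic labelling A, B, C, D of the quadrangle satisfies
   s v_A + (1 - s) v_C = t v_B + (1 - t) v_D, which must be a multiple of the nodal
   relation; all its coefficients therefore have equal absolute value, s = t = 1/2,
   and v_A + v_C = v_B + v_D as well. *)

Lemma dotZD (m x y : 'rV[int]_3) : dotZ m (x + y) = dotZ m x + dotZ m y.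
Proof. by rewrite /dotZ -big_split; apply: eq_bigr => k _; rewrite mxE mulrDr. Qed.

Lemma dotZ0 (x : 'rV[int]_3) : dotZ 0 x = 0.
Proof. by rewrite /dotZ big1 // => k _; rewrite mxE mul0r. Qed.

Lemma det3_free (a b c : 'rV[int]_3) (x y z : rat) : det3 a b c != 0 ->
  x *: toQ a + y *: toQ b + z *: toQ c = 0 -> [/\ x = 0, y = 0 & z = 0].
Proof.
move=> det_neq0 comb0.
set M := \matrix_(i < 3, k < 3) ([:: a; b; c]`_i) 0 k.
have unitM : map_mx (intr : int -> rat) M \in unitmx.
  by rewrite unitmxE det_map_mx unitfE intr_eq0.
pose w : 'rV[rat]_3 := \row_j [:: x; y; z]`_j.
have wM0 : w *m map_mx intr M = 0.
  rewrite -comb0; apply/rowP => k.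
  by rewrite !mxE !big_ord_recl big_ord0 !mxE /= addr0 addrA.
have w0 : w = 0 by rewrite -(mulmxK unitM w) wM0 mul0mx.
move/rowP: w0 => w0.
by split; [move: (w0 ord0) | move: (w0 (@Ordinal 3 1 isT)) | move: (w0 (@Ordinal 3 2 isT))];
  rewrite !mxE.
Qed.

Lemma det3_unit_interp (a b c : 'rV[int]_3) (xa xb xc : int) : `|det3 a b c| = 1 ->
  exists m : 'rV[int]_3, [/\ dotZ m a = xa, dotZ m b = xb & dotZ m c = xc].
Proof.
move=> det_unit.
set M := \matrix_(i < 3, k < 3) ([:: a; b; c]`_i) 0 k.
have unitM : M \in unitmx.
  rewrite unitmxE; apply/unitrPr; exists (\det M).
  by rewrite -expr2 -(real_normK (num_real _)) det_unit expr1n.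
pose rhs : 'cV[int]_3 := \col_i [:: xa; xb; xc]`_i.
have solM : M *m (invmx M *m rhs) = rhs by rewrite mulmxA mulmxV // mul1mx.
exists (invmx M *m rhs)^T.
have dotE (i : 'I_3) : dotZ (invmx M *m rhs)^T ([:: a; b; c]`_i) = [:: xa; xb; xc]`_i.
  move/colP: solM => /(_ i); rewrite !mxE => <-.
  by apply: eq_bigr => k _; rewrite !mxE mulrC.
by split; [apply: (dotE ord0) | apply: (dotE (@Ordinal 3 1 isT))
          | apply: (dotE (@Ordinal 3 2 isT))].
Qed.

Lemma card_set4_uniq (T : finType) (a b c d : T) :
  #|[set a; b; c; d]| = 4%N -> uniq [:: a; b; c; d].
Proof.
have -> : [set a; b; c; d] = [set x in [:: a; b; c; d]].
  by apply/setP => x; rewrite !inE -!orbA.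
by rewrite cardsE => card4; apply/card_uniqP; rewrite card4.
Qed.

Lemma big_set4 (R : nmodType) (T : finType) (a b c d : T) (G : T -> R) :
  uniq [:: a; b; c; d] -> \sum_(i in [set a; b; c; d]) G i = G a + G b + G c + G d.
Proof.
move=> uniq_abcd; rewrite -big_enum.
have enumE : perm_eq (enum [set a; b; c; d]) [:: a; b; c; d].
  apply: uniq_perm => //; first exact: enum_uniq.
  by move=> x; rewrite mem_enum !inE -!orbA.
by rewrite (perm_big _ enumE) !big_cons big_nil /= addr0 !addrA.
Qed.

Definition fun4 (T : eqType) (R : Type) (a b c d : T) (ya yb yc yd : R) (x : T) : R :=
  if x == a then ya else if x == b then yb else if x == c then yc else yd.

Lemma fun4E (T : eqType) (R : Type) (a b c d : T) (ya yb yc yd : R) :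
  uniq [:: a; b; c; d] -> let f := fun4 a b c d ya yb yc yd in
  [/\ f a = ya, f b = yb, f c = yc & f d = yd].
Proof.
rewrite /= !inE !negb_or => /and4P[/and3P[nab nac nad] /andP[nbc nbd] ncd _].
rewrite /fun4; split; rewrite ?eqxx //.
- by rewrite eq_sym (negbTE nab).
- by rewrite eq_sym (negbTE nac) eq_sym (negbTE nbc).
- by rewrite eq_sym (negbTE nad) eq_sym (negbTE nbd) eq_sym (negbTE ncd).
Qed.

Lemma phiABCD_supp1_eq0 (n : nat) (g : 'I_n -> int) (A B C D x : 'I_n) :
  uniq [:: A; B; C; D] -> x \in [set A; B; C; D] ->
  {in [set A; B; C; D], forall i, i != x -> g i = 0} ->
  phiABCD g A B C D = 0 -> g x = 0.
Proof.
move=> uniq4 xS g0.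
pose sgn := fun4 A B C D (1 : int) (-1) 1 (-1).
have [sA sB sC sD] := fun4E (1 : int) (-1) 1 (-1) uniq4.
have -> : phiABCD g A B C D = \sum_(i in [set A; B; C; D]) sgn i * g i.
  by rewrite big_set4 // /sgn sA sB sC sD /phiABCD; ring.
rewrite (bigD1 x) //= big1 ?addr0 => [/eqP|i /andP[iS ix]]; last by rewrite g0 ?mulr0.
by rewrite mulf_eq0 => /orP[|/eqP //]; rewrite /sgn /fun4; repeat case: ifP.
Qed.

Section Fan.
Variables (n : nat) (v : 'I_n -> 'rV[int]_3).

Lemma node_relation_norm (A B C D : 'I_n) (mu : 'I_n -> rat) :
  uniq [:: A; B; C; D] -> v A + v C = v B + v D -> unimodular v A B C ->
  \sum_(i in [set A; B; C; D]) mu i *: toQ (v i) = 0 ->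
  {in [set A; B; C; D], forall i, `|mu i| = `|mu D|}.
Proof.
move=> uniq4 node unimod; rewrite big_set4 // => rel0.
have det_neq0 : det3 (v A) (v B) (v C) != 0 by rewrite -normr_eq0 unimod.
have rel3 : (mu A + mu D) *: toQ (v A) + (mu B - mu D) *: toQ (v B)
            + (mu C + mu D) *: toQ (v C) = 0.
  rewrite -rel0; apply/rowP => k; move/rowP: node => /(_ k); rewrite !mxE => nodek.
  have -> : v D 0 k = v A 0 k + v C 0 k - v B 0 k by rewrite nodek; ring.
  by rewrite !intrD intrN; ring.
have [/eqP + /eqP + /eqP] := det3_free det_neq0 rel3.
rewrite subr_eq0 !addr_eq0 => /eqP muA /eqP muB /eqP muC.
by move=> i; rewrite !inE -!orbA => /or4P[] /eqP->; rewrite ?muA ?muB ?muC ?normrN.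
Qed.

Lemma quad_face_node (F : {set 'I_n}) : nodal v -> quad_face v F ->
  exists A B C D, [/\ F = [set A; B; C; D], uniq [:: A; B; C; D],
                      v A + v C = v B + v D & unimodular v A B C].
Proof.
move=> nod [facetF card4].
have [[i [j [k [_ [card3 _]]]]] | [_ [A [B [C [D [[defF _] node unimod]]]]]]] :=
  nod F facetF.
  by rewrite card4 in card3.
by exists A, B, C, D; split=> //; apply: card_set4_uniq; rewrite -defF.
Qed.

Lemma quad_face_relation (F : {set 'I_n}) (A B C D : 'I_n) : nodal v -> quad_face v F ->
  cyclic_labeling v F A B C D -> v A + v C = v B + v D.
Proof.
move=> nod quadF [defF [s [t [/andP[s_gt0 s_lt1] /andP[t_gt0 t_lt1] diag]]]].
have [A' [B' [C' [D' [defF' uniq4' node unimod]]]]] := quad_face_node nod quadF.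
have uniq4 : uniq [:: A; B; C; D] by apply: card_set4_uniq; rewrite -defF; case: quadF.
pose mu := fun4 A B C D s (- t) (1 - s) (t - 1).
have [muA muB muC muD] := fun4E s (- t) (1 - s) (t - 1) uniq4.
have rel0 : \sum_(i in F) mu i *: toQ (v i) = 0.
  rewrite defF big_set4 // /mu muA muB muC muD; apply/rowP => k.
  by move/rowP: diag => /(_ k); rewrite !mxE => diagk; lra.
have := node_relation_norm uniq4' node unimod; rewrite -defF' => /(_ mu rel0) normE.
have normAC : `|mu A| = `|mu C| by rewrite !normE // defF !inE eqxx ?orbT.
have normBD : `|mu B| = `|mu D| by rewrite !normE // defF !inE eqxx ?orbT.
rewrite /mu muA muC !gtr0_norm ?subr_gt0 // in normAC.
rewrite /mu muB muD normrN gtr0_norm // ltr0_norm ?subr_lt0 // in normBD.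
have s_half : s = 2^-1 by lra.
have t_half : t = 2^-1 by lra.
apply/rowP => k; move/rowP: diag => /(_ k); rewrite !mxE s_half t_half => diagk.
by apply: (@intr_inj rat); rewrite !intrD; lra.
Qed.

Lemma phiABCD_dotZ (m : 'rV[int]_3) (A B C D : 'I_n) :
  v A + v C = v B + v D -> phiABCD (fun i => dotZ m (v i)) A B C D = 0.
Proof. by move/(congr1 (dotZ m)); rewrite !dotZD /phiABCD; lia. Qed.

Lemma phiABCD_cartier (a : 'I_n -> int) (m : 'rV[int]_3) (A B C D : 'I_n) :
  v A + v C = v B + v D -> {in [set A; B; C; D], forall i, dotZ m (v i) = - a i} ->
  phiABCD a A B C D = 0.
Proof.
move=> rel am; have := phiABCD_dotZ m rel.
by rewrite /phiABCD !am ?inE ?eqxx ?orbT //; lia.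
Qed.

Lemma simplex_cartier (a : 'I_n -> int) (i j k : 'I_n) : unimodular v i j k ->
  exists m : 'rV[int]_3, {in [set i; j; k], forall x, dotZ m (v x) = - a x}.
Proof.
move=> unimod; have [m [mi mj mk]] := det3_unit_interp (- a i) (- a j) (- a k) unimod.
by exists m => x; rewrite !inE -!orbA => /or3P[] /eqP->.
Qed.

Lemma node_cartier (F : {set 'I_n}) (A B C D : 'I_n) (a : 'I_n -> int) :
  nodal v -> quad_face v F -> cyclic_labeling v F A B C D -> phiABCD a A B C D = 0 ->
  exists m : 'rV[int]_3, {in F, forall i, dotZ m (v i) = - a i}.
Proof.
move=> nod quadF labF phi0.
have rel := quad_face_relation nod quadF labF.
have [A' [B' [C' [D' [defF' _ _ unimod]]]]] := quad_face_node nod quadF.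
have [m [mA mB mC]] := det3_unit_interp (- a A') (- a B') (- a C') unimod.
exists m.
pose g i := a i + dotZ m (v i).
have gD : a D' + dotZ m (v D') = 0.
  case: labF => defF _.
  apply: (@phiABCD_supp1_eq0 _ g A B C D).
  - by apply: card_set4_uniq; rewrite -defF; case: quadF.
  - by rewrite -defF defF' !inE eqxx ?orbT.
  - rewrite -defF defF' => i; rewrite !inE -!orbA.
    by move=> /or4P[] /eqP->; rewrite ?eqxx // => _; rewrite /g ?mA ?mB ?mC addrN.
  by have := phiABCD_dotZ m rel; rewrite /phiABCD /g in phi0 *; lia.
by move=> i; rewrite defF' !inE -!orbA => /or4P[] /eqP->; rewrite ?mA ?mB ?mC //; lia.
Qed.

End Fan.

Theorem lemma3p4 (n : nat) (v : 'I_n -> 'rV[int]_3)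
  (Sig' : {set {set 'I_n}})
  (lab : {set 'I_n} -> 'I_n * 'I_n * 'I_n * 'I_n) :
  fano_polytope v -> nodal v -> small_resolution v Sig' ->
  (forall F, quad_face v F ->
     let: (A, B, C, D) := lab F in cyclic_labeling v F A B C D) ->
  let cartX := cartier v (is_facet v) in
  let cartXt := cartier v (fun t => t \in Sig') in
  let phi := fun (a : 'I_n -> int) (F : {set 'I_n}) =>
               let: (A, B, C, D) := lab F in phiABCD a A B C D in
  [/\ (* pullback Pic X -> Pic X~ is well defined *)
      forall a, cartX a -> cartXt a,
      (* ... and injective *)
      forall a b, cartX a -> cartX b -> lin_equiv v a b -> lin_equiv v a b,
      (* phi is well defined on Pic X~ *)
      forall a b, cartXt a -> cartXt b -> lin_equiv v a b ->
        forall F, quad_face v F -> phi a F = phi b F,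
      (* image of Pic X is contained in ker phi *)
      forall a, cartX a -> forall F, quad_face v F -> phi a F = 0
    & (* ker phi is contained in the image of Pic X *)
      forall a, cartXt a -> (forall F, quad_face v F -> phi a F = 0) ->
        exists2 b, cartX b & lin_equiv v a b].
Proof.
move=> _ nod [_ cone_facet _ _] labP cartX cartXt phi.
split.
- move=> a cartXa t /cone_facet[F [facetF subF]]; have [m am] := cartXa F facetF.
  by exists m => i /(subsetP subF); apply: am.
- by [].
- move=> a b _ _ [m abm] F quadF; rewrite /phi.
  have := labP F quadF; case: (lab F) => [[[A B] C] D] /(quad_face_relation nod quadF) rel.
  by have := phiABCD_dotZ m rel; rewrite /phiABCD -!abm; lia.
- move=> a cartXa F quadF; have [m am] := cartXa F quadF.1; rewrite /phi.
  have := labP F quadF; case: (lab F) => [[[A B] C] D] labF.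
  apply: (phiABCD_cartier (m := m) (quad_face_relation nod quadF labF)).
  by case: labF => <-.
- move=> a _ phi0; exists a; last by exists 0 => i; rewrite subrr dotZ0.
  move=> F facetF; have [[i [j [k [-> [_ unimod]]]]] | [card4 _]] := nod F facetF.
    exact: simplex_cartier.
  have quadF : quad_face v F by [].
  have := phi0 F quadF; have := labP F quadF; rewrite /phi.
  by case: (lab F) => [[[A B] C] D]; apply: node_cartier.
Qed.
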